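(* Consider a time window $W$ between two consecutive rebuilds of an ordered linear probing hash table. If an insertion $u$ in $W$ hashes to position $i$, then it takes time $O(o_i+s_i+d_u+1)$. If a query or deletion $u$ in $W$ hashes to position $i$, then it takes time $O(o_i+s_i+1)$.
   Context: Ordered linear probing with tombstones: slots $1,\dots,n$, each holding a key, tombstone, or free; a tombstone's hash is that of the deleted key; entries in each maximal run of non-free slots are stored in hash order. A query for $u$ scans $h(u),h(u)+1,\dots$ until finding $u$, an entry with hash greater than $h(u)$, or a free slot; a deletion performs the query and replaces $u$ by a tombstone; an insertion places $u$ at its hash-order position and shifts subsequent entries right by one until reaching a tombstone or free slot, which it uses. Time = number of slots examined/moved. The peak $p_u$ of an insertion is the hash of the tombstone it uses, or the position of the free slot it uses; its displacement is $d_u=p_u-h(u)$. The positional offset $o_i$ is $j-i$ where $j\ge i$ is the largest position such that at the end of $W$ all positions in $[i,j-1]$ contain keys/tombstones with hashes smaller than $i$. The spillover $s_i$ is the largest $k\ge0$ such that, among all keys that are present at the start of $W$ or inserted during $W$, at least $4k$ have hashes in $[i,i+k)$. *)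

From mathcomp Require Import all_boot.
Set Implicit Arguments. Unset Strict Implicit. Unset Printing Implicit Defensive.

Section OLP.
Variable K : eqType.

(* A slot: free, a key, or a tombstone carrying the hash of the deleted key. *)
Inductive slot := Free | Key of K | Tomb of nat.

Inductive op := Ins of K | Del of K | Qry of K.

(* A table is a map from positions to slots; only positions 1..n are real. *)
Definition table := nat -> slot.

Variables (n : nat) (h : K -> nat).

Definition get (T : table) (q : nat) : slot :=
  if (1 <= q <= n) then T q else Free.

Definition is_free (s : slot) : bool := if s is Free then true else false.
Definition is_tomb (s : slot) : bool := if s is Tomb _ then true else false.
Definition is_key (u : K) (s : slot) : bool :=
  if s is Key x then x == u else false.
(* hash of an entry (meaningless, 0, for a free slot) *)
Definition slot_hash (s : slot) : nat :=
  match s with Free => 0 | Key x => h x | Tomb a => a end.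

(* least q in [a, b) with P q, or b if there is none *)
Definition first_at (P : pred nat) (a b : nat) : nat :=
  a + find P (iota a (b - a)).

(* Position where the query for u stops: u found, an entry with hash > h u,
   or a free slot.  (Position n+1 is "free".) *)
Definition qpos (T : table) (u : K) : nat :=
  first_at (fun q => let s := get T q in
              [|| is_free s, is_key u s | h u < slot_hash s]) (h u) n.+1.

(* Hash-order position for inserting u: first free slot or entry with
   hash > h u, starting from h u (u goes after entries of equal hash). *)
Definition ipos (T : table) (u : K) : nat :=
  first_at (fun q => let s := get T q in is_free s || (h u < slot_hash s))
           (h u) n.+1.

Definition tpos (T : table) (p : nat) : nat :=
  first_at (fun q => let s := get T q in is_free s || is_tomb s) p n.+1.

Definition present (T : table) (u : K) : bool :=
  has (fun q => is_key u (T q)) (iota 1 n).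

(* One operation: new table, time (slots examined/moved), displacement d_u
   (0 for queries and deletions). *)
Definition step (T : table) (o : op) : option (table * nat * nat) :=
  match o with
  | Qry u => Some (T, qpos T u - h u + 1, 0)
  | Del u =>
      let q := qpos T u in
      if is_key u (get T q) then
        Some ((fun r => if r == q then Tomb (h u) else T r), q - h u + 1, 0)
      else None
  | Ins u =>
      if present T u then None else
      let p := ipos T u in
      let q := tpos T p in
      if q <= n then
        let peak := match get T q with Tomb a => a | _ => q end in
        Some ((fun r => if r == p then Key u
                        else if (p < r <= q) then T r.-1 else T r),
              q - h u + 1, peak - h u)
      else None
  end.

Fixpoint exec (T : table) (ops : seq op) : option (table * seq (nat * nat)) :=
  match ops with
  | [::] => Some (T, [::])
  | o :: ops' =>
      match step T o with
      | None => None
      | Some (T1, c, d) =>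
          match exec T1 ops' with
          | None => None
          | Some (Te, l) => Some (Te, (c, d) :: l)
          end
      end
  end.

(* State right after a rebuild: no tombstones, standard linear-probing
   invariant (no free slot between an entry's hash and its position), and
   entries of each run are in hash order. *)
Definition rebuilt (T : table) : Prop :=
  [/\ forall q, 1 <= q <= n -> ~~ is_tomb (T q),
      forall q x, 1 <= q <= n -> T q = Key x ->
        h x <= q /\ (forall r, h x <= r <= q -> ~~ is_free (T r))
    & forall q, 1 <= q < n -> ~~ is_free (T q) -> ~~ is_free (T q.+1) ->
        slot_hash (T q) <= slot_hash (T q.+1)].

Definition offset (T : table) (i : nat) : nat :=
  \max_(j < n.+2 | (i <= j) &&
        all (fun q => ~~ is_free (get T q) && (slot_hash (get T q) < i))
            (index_iota i j)) (j - i).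

Definition key_of (s : slot) : option K := if s is Key x then Some x else None.
Definition ins_key (o : op) : option K := if o is Ins u then Some u else None.

Definition window_hashes (T0 : table) (ops : seq op) : seq nat :=
  [seq h x | x <- pmap (fun q => key_of (T0 q)) (iota 1 n)]
  ++ [seq h u | u <- pmap ins_key ops].

Definition spill (hs : seq nat) (i : nat) : nat :=
  \max_(k < (size hs).+1 | 4 * k <= count (fun a => i <= a < i + k) hs) k.

End OLP.

From mathcomp Require Import all_boot zify.
Set Implicit Arguments. Unset Strict Implicit. Unset Printing Implicit Defensive.

(* Fix a window W that starts from a rebuilt table.  Three facts
   about the tables reached during W drive the bound.
   (1) Well-formedness [wf]: every entry's hash is at most its position,
       hashes are nondecreasing along a run, and no slot between an entry's
       hash and its position is free.  Rebuilt tables are well formed and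
       every operation preserves this (for insertions: [shift_insert_wf]).
   (2) Stability of low prefixes [low_prefix T i j]: the slots of [i, j) are
       all occupied by entries of hash < i.  Once true, this stays true for
       the rest of W, so j - i <= o_i for the table at the end of W.
   (3) Counting [hash_count P T]: the number of entries whose hash satisfies
       P grows only through insertions, so it is at most the number of keys
       of the window (present at its start or inserted in it) with that hash.
   An operation hashing to i scans an interval [i, e) of occupied slots of
   hash at most B, where B = i for queries and deletions and B = peak for
   insertions.  Cutting [i, e) at its first slot of hash >= i leaves a low
   prefix [i, j) and e - j entries of hash in [i, B]; by (3) and the
   definition of spillover there are at most 4 s_i + 4 (B - i + 1) of them.
   Hence every operation costs at most 5 (o_i + s_i + d_u + 1).
   The file follows this plan: bounded linear search, the shape of a table
   and the invariants, the insertion shift (section Insertion), preservation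
   by whole operations and windows, and finally the cost accounting. *)

Lemma first_at_ge (P : pred nat) a b : a <= first_at P a b.
Proof. by rewrite /first_at leq_addr. Qed.

Lemma first_at_le (P : pred nat) a b : a <= b -> first_at P a b <= b.
Proof.
move=> ab; rewrite /first_at.
have := find_size P (iota a (b - a)); rewrite size_iota; lia.
Qed.

Lemma first_at_before (P : pred nat) a b s :
  a <= s -> s < first_at P a b -> ~~ P s.
Proof.
rewrite /first_at => a_s s_lt.
have s_size : s - a < b - a.
  have := find_size P (iota a (b - a)); rewrite size_iota; lia.
have s_before : s - a < find P (iota a (b - a)) by lia.
by have := before_find 0 s_before; rewrite nth_iota // subnKC // => ->.
Qed.

Lemma first_at_hit (P : pred nat) a b :
  first_at P a b < b -> P (first_at P a b).
Proof.
rewrite /first_at => hit.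
have found : find P (iota a (b - a)) < size (iota a (b - a)).
  by rewrite size_iota; lia.
have in_range := found; rewrite size_iota in in_range; rewrite -has_find in found.
by have := nth_find 0 found; rewrite nth_iota.
Qed.

Section Table.
Variables (K : eqType) (n : nat) (h : K -> nat).

Definition occupied (T : table K) (s : nat) : bool := ~~ is_free (get n T s).
Definition hash_at (T : table K) (s : nat) : nat := slot_hash h (get n T s).

Definition wf (T : table K) : Prop :=
  [/\ forall r, hash_at T r <= r,
      forall r, occupied T r -> occupied T r.+1 -> hash_at T r <= hash_at T r.+1
    & forall r s, occupied T r -> hash_at T r <= s <= r -> occupied T s].

(* Slots [i, j) hold entries hashing strictly before i: this witnesses o_i. *)
Definition low_prefix (T : table K) (i j : nat) : Prop :=
  forall s, i <= s < j -> occupied T s /\ hash_at T s < i.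

Definition hash_count (P : pred nat) (T : table K) : nat :=
  \sum_(1 <= r < n.+1) (occupied T r && P (hash_at T r)).

Lemma occupied_range (T : table K) s : occupied T s -> 1 <= s <= n.
Proof. by rewrite /occupied /get; case: ifP. Qed.

Lemma get_in (T : table K) s : 1 <= s <= n -> get n T s = T s.
Proof. by rewrite /get => ->. Qed.

Lemma wf_hash_mono (T : table K) a b : wf T ->
  (forall t, a <= t <= b -> occupied T t) -> a <= b ->
  hash_at T a <= hash_at T b.
Proof.
case=> _ sorted _; elim: b => [|b IH] occ a_b; first by have -> : a = 0 by lia.
case: (ltnP a b.+1) => a_lt; last by have -> : a = b.+1 by lia.
apply: leq_trans (IH _ _) (sorted _ _ _) => [t t_in|||]; try apply: occ; lia.
Qed.

End Table.

Definition shift_insert (K : eqType) (T : table K) (v : K) (p q : nat) : table K :=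
  fun r => if r == p then Key v else if (p < r <= q) then T r.-1 else T r.

Definition peak_at (K : eqType) (n : nat) (T : table K) (q : nat) : nat :=
  match get n T q with Tomb a => a | _ => q end.

Section Insertion.
Variables (K : eqType) (n : nat) (h : K -> nat).
Variables (T : table K) (v : K) (p q : nat).
Hypotheses (p_pos : 1 <= p) (hv_p : h v <= p) (p_q : p <= q) (q_n : q <= n).
Hypothesis before_p :
  forall s, h v <= s < p -> occupied n T s /\ hash_at n h T s <= h v.
Hypothesis after_p : occupied n T p -> h v < hash_at n h T p.
Hypothesis shifted_occupied : forall s, p <= s < q -> occupied n T s.
Hypothesis stop_q : ~~ occupied n T q \/ is_tomb (get n T q).

Local Notation T' := (shift_insert T v p q).

Lemma shift_get_at : get n T' p = Key v.
Proof. by rewrite /get /shift_insert eqxx; have -> : (1 <= p <= n) = true by lia. Qed.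

Lemma shift_get_mid r : p < r <= q -> get n T' r = get n T r.-1.
Proof.
move=> r_in; rewrite /get /shift_insert ifN_eq; last lia.
have -> : (1 <= r <= n) = true by lia.
have -> : (1 <= r.-1 <= n) = true by lia.
by rewrite r_in.
Qed.

Lemma shift_get_out r : r < p \/ q < r -> get n T' r = get n T r.
Proof.
move=> r_out; rewrite /get /shift_insert ifN_eq; last lia.
by have -> : (p < r <= q) = false by lia.
Qed.

Lemma shift_occupied_at : occupied n T' p.
Proof. by rewrite /occupied shift_get_at. Qed.

Lemma shift_hash_at : hash_at n h T' p = h v.
Proof. by rewrite /hash_at shift_get_at. Qed.

Lemma shift_occupied_mid r : p < r <= q -> occupied n T' r.
Proof. by move=> r_in; rewrite /occupied shift_get_mid //; apply: shifted_occupied; lia. Qed.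

Lemma shift_hash_mid r : p < r <= q -> hash_at n h T' r = hash_at n h T r.-1.
Proof. by move=> r_in; rewrite /hash_at shift_get_mid. Qed.

Lemma shift_occupied_out r : r < p \/ q < r -> occupied n T' r = occupied n T r.
Proof. by move=> r_out; rewrite /occupied shift_get_out. Qed.

Lemma shift_hash_out r : r < p \/ q < r -> hash_at n h T' r = hash_at n h T r.
Proof. by move=> r_out; rewrite /hash_at shift_get_out. Qed.

Lemma shift_occupied_mono r : occupied n T r -> occupied n T' r.
Proof.
move=> occ_r; case: (ltngtP r p) => [r_p|p_r|->]; last exact: shift_occupied_at.
  by rewrite shift_occupied_out //; left.
case: (leqP r q) => r_q; first by apply: shift_occupied_mid; lia.
by rewrite shift_occupied_out //; right.
Qed.

Section Wf.
Hypothesis wfT : wf n h T.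

Lemma shift_hash_le r : hash_at n h T' r <= r.
Proof.
case: wfT => hash_le _ _.
case: (ltngtP r p) => [r_p|p_r|->]; last by rewrite shift_hash_at.
  by rewrite shift_hash_out //; left.
case: (leqP r q) => r_q; last by rewrite shift_hash_out //; right.
by rewrite shift_hash_mid; [have := hash_le r.-1; lia | lia].
Qed.

Lemma shift_block_le_next r : occupied n T q.+1 -> p <= r <= q ->
  hash_at n h T' r <= hash_at n h T q.+1.
Proof.
case: wfT => _ sorted no_gap occ_next r_in.
case: stop_q => [free_q|tomb_q].
  have q_lt : q < hash_at n h T q.+1.
    rewrite ltnNge; apply/negP => le_q; move/negP: free_q; apply.
    by apply: (no_gap q.+1); lia.
  by have := shift_hash_le r; lia.
have occ_q : occupied n T q by move: tomb_q; rewrite /occupied; case: (get n T q).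
have occ_block t : p <= t <= q -> occupied n T t.
  by move=> t_in; case: (ltnP t q) => t_q; [apply: shifted_occupied | have -> : t = q]; lia.
apply: leq_trans (sorted q occ_q occ_next).
case: (ltnP p r) => p_r.
  rewrite shift_hash_mid; last lia.
  by apply: wf_hash_mono => //; try (move=> t t_in; apply: occ_block); lia.
have -> : r = p by lia.
rewrite shift_hash_at; apply: ltnW; apply: leq_trans (after_p (occ_block p _)) _; first lia.
by apply: wf_hash_mono => //; try (move=> t t_in; apply: occ_block); lia.
Qed.

Lemma shift_sorted r : occupied n T' r -> occupied n T' r.+1 ->
  hash_at n h T' r <= hash_at n h T' r.+1.
Proof.
case: wfT => hash_le sorted _ occ_r occ_r1.
case: (ltngtP r.+1 p) => [r1_p|p_r1|r1_p].
- rewrite !shift_hash_out; try (left; lia).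
  by apply: sorted; rewrite -shift_occupied_out //; left; lia.
- case: (ltngtP r q) => [r_q|q_r|r_q]; last subst r.
  + rewrite [hash_at _ _ _ r.+1]shift_hash_mid /=; last lia.
    case: (ltnP p r) => p_r.
      rewrite shift_hash_mid; last lia.
      have := sorted r.-1; rewrite prednK; last lia.
      by apply; apply: shifted_occupied; lia.
    have -> : r = p by lia.
    by rewrite shift_hash_at; apply: ltnW; apply: after_p; apply: shifted_occupied; lia.
  + rewrite !shift_hash_out; try (right; lia).
    by apply: sorted; rewrite -shift_occupied_out //; right; lia.
  + rewrite [hash_at _ _ _ q.+1]shift_hash_out; last (right; lia).
    apply: shift_block_le_next; last lia.
    by rewrite -shift_occupied_out //; lia.
- rewrite r1_p shift_hash_at shift_hash_out; last (left; lia).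
  case: (leqP (h v) r) => hv_r; first by have [] := @before_p r ltac:(lia).
  by have := hash_le r; lia.
Qed.

Lemma shift_no_gap r s : occupied n T' r -> hash_at n h T' r <= s <= r ->
  occupied n T' s.
Proof.
case: wfT => _ _ no_gap occ_r s_in.
case: (ltngtP r p) => [r_p|p_r|r_p].
- apply: shift_occupied_mono; apply: (no_gap r).
    by rewrite -shift_occupied_out //; left.
  by rewrite -shift_hash_out //; left.
- case: (leqP r q) => r_q.
    case: (ltnP s r) => s_r; last by apply: shift_occupied_mid; lia.
    apply: shift_occupied_mono; apply: (no_gap r.-1); first by apply: shifted_occupied; lia.
    by rewrite -shift_hash_mid; lia.
  apply: shift_occupied_mono; apply: (no_gap r).
    by rewrite -shift_occupied_out //; right.
  by rewrite -shift_hash_out //; right.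
- rewrite r_p shift_hash_at in s_in.
  case: (ltnP s p) => s_p.
    by apply: shift_occupied_mono; have [] := @before_p s ltac:(lia).
  have -> : s = p by lia.
  exact: shift_occupied_at.
Qed.

Lemma shift_insert_wf : wf n h T'.
Proof. by split; [exact: shift_hash_le | exact: shift_sorted | exact: shift_no_gap]. Qed.

(* A low prefix survives insertion: the entries moved into it hash before it. *)
Lemma shift_low_prefix i j : low_prefix n h T i j -> low_prefix n h T' i j.
Proof.
case: wfT => hash_le _ _ low s s_in.
case: (ltngtP s p) => [s_p|p_s|s_p]; last subst s.
- by rewrite shift_occupied_out ?shift_hash_out; try (left; lia); apply: low.
- case: (leqP s q) => s_q.
    rewrite shift_hash_mid; last lia.
    split; first by apply: shift_occupied_mid; lia.
    case: (leqP i s.-1) => i_s; first by have [] := low s.-1; [lia|].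
    by have := hash_le s.-1; lia.
  by rewrite shift_occupied_out ?shift_hash_out; try (right; lia); apply: low.
- rewrite shift_hash_at; split; first exact: shift_occupied_at.
  by have [occ_p hp] := low p s_in; have := after_p occ_p; lia.
Qed.

End Wf.

(* Insertion adds the entry v and may consume a tombstone. *)
Lemma shift_hash_count (P : pred nat) :
  hash_count n h P T' <= hash_count n h P T + P (h v).
Proof.
rewrite /hash_count (big_cat_nat _ (n := p)) //=; last lia.
rewrite [X in _ <= X + _](big_cat_nat _ (n := p)) //=; last lia.
rewrite (big_cat_nat _ (n := q.+1) (m := p)) //=; try lia.
rewrite [X in _ <= _ + X + _](big_cat_nat _ (n := q.+1) (m := p)) //=; try lia.
have left_eq : \sum_(1 <= r < p) (occupied n T' r && P (hash_at n h T' r)) =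
               \sum_(1 <= r < p) (occupied n T r && P (hash_at n h T r)).
  by apply: eq_big_nat => r r_in; rewrite shift_occupied_out ?shift_hash_out //; left; lia.
have right_eq : \sum_(q.+1 <= r < n.+1) (occupied n T' r && P (hash_at n h T' r)) =
                \sum_(q.+1 <= r < n.+1) (occupied n T r && P (hash_at n h T r)).
  by apply: eq_big_nat => r r_in; rewrite shift_occupied_out ?shift_hash_out //; right; lia.
have mid_eq : \sum_(p <= r < q.+1) (occupied n T' r && P (hash_at n h T' r)) =
              P (h v) + \sum_(p <= r < q) (occupied n T r && P (hash_at n h T r)).
  rewrite big_ltn; last lia.
  rewrite shift_occupied_at shift_hash_at big_add1 /=; congr (_ + _).
  apply: eq_big_nat => r r_in.
  by rewrite shift_occupied_mid ?shift_hash_mid ?shifted_occupied //=; lia.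
have mid_le : \sum_(p <= r < q) (occupied n T r && P (hash_at n h T r)) <=
              \sum_(p <= r < q.+1) (occupied n T r && P (hash_at n h T r)).
  by rewrite big_nat_recr /=; [apply: leq_addr | lia].
rewrite left_eq mid_eq right_eq; lia.
Qed.

Lemma scan_below_peak : wf n h T ->
  forall s, h v <= s < q -> occupied n T s /\ hash_at n h T s <= peak_at n T q.
Proof.
move=> wfT s s_in.
have occ_s : occupied n T s.
  by case: (ltnP s p) => s_p; [have [] := @before_p s | apply: shifted_occupied]; lia.
split => //; case: stop_q => [free_q|tomb_q].
  have -> : peak_at n T q = q by rewrite /peak_at; move: free_q; rewrite /occupied; case: (get n T q).
  by case: wfT => hash_le _ _; have := hash_le s; lia.
have occ_q : occupied n T q by move: tomb_q; rewrite /occupied; case: (get n T q).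
have : hash_at n h T s <= hash_at n h T q.
  apply: wf_hash_mono => // [t t_in|]; last lia.
  case: (ltnP t q) => [t_q|q_t]; last by have -> : t = q by lia.
  by case: (ltnP t p) => t_p; [have [] := @before_p t | apply: shifted_occupied]; lia.
by rewrite /hash_at /peak_at; move: tomb_q; case: (get n T q).
Qed.

End Insertion.

Section Operations.
Variables (K : eqType) (n : nat) (h : K -> nat).
Hypothesis hash_range : forall x, 1 <= h x <= n.

Lemma qpos_spec (T : table K) u :
  h u <= qpos n h T u /\
  forall s, h u <= s < qpos n h T u -> occupied n T s /\ hash_at n h T s <= h u.
Proof.
split=> [|s /andP [s_ge s_lt]]; first exact: first_at_ge.
have := first_at_before s_ge s_lt.
by rewrite /occupied /hash_at; case: (get n T s) => //= [x|a]; lia.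
Qed.

Lemma ipos_spec (T : table K) u (p := ipos n h T u) :
  [/\ h u <= p,
      forall s, h u <= s < p -> occupied n T s /\ hash_at n h T s <= h u
    & occupied n T p -> h u < hash_at n h T p].
Proof.
split=> [|s /andP [s_ge s_lt]|]; first exact: first_at_ge.
  have := first_at_before s_ge s_lt.
  by rewrite /occupied /hash_at; case: (get n T s) => //= [x|a]; lia.
case: (ltnP p n.+1) => [p_lt|p_ge].
  by have := first_at_hit p_lt; rewrite /occupied /hash_at -/p; case: (get n T p).
by rewrite /occupied /get; have -> : (1 <= p <= n) = false by lia.
Qed.

Lemma tpos_spec (T : table K) p (q := tpos n T p) :
  [/\ p <= q, forall s, p <= s < q -> occupied n T s
    & q <= n -> ~~ occupied n T q \/ is_tomb (get n T q)].
Proof.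
split=> [|s /andP [s_ge s_lt]|q_n]; first exact: first_at_ge.
  by have := first_at_before s_ge s_lt; rewrite /occupied; case: (get n T s).
have q_lt : q < n.+1 by lia.
have := first_at_hit q_lt; rewrite /occupied -/q.
by case: (get n T q) => //= *; [left|right].
Qed.

Lemma insert_step (T T' : table K) u c d :
  step n h T (Ins u) = Some (T', c, d) ->
  exists p q,
    [/\ T' = shift_insert T u p q, c = q - h u + 1 & d = peak_at n T q - h u]
    /\ [/\ 1 <= p, h u <= p, p <= q & q <= n]
    /\ [/\ forall s, h u <= s < p -> occupied n T s /\ hash_at n h T s <= h u,
           occupied n T p -> h u < hash_at n h T p,
           forall s, p <= s < q -> occupied n T s
         & ~~ occupied n T q \/ is_tomb (get n T q)].
Proof.
rewrite /=; case: ifP => // _.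
have [hu_p before_p after_p] := ipos_spec T u; set p := ipos n h T u in hu_p before_p after_p *.
have [p_q shifted stop] := tpos_spec T p; set q := tpos n T p in p_q shifted stop *.
case: ifP => // q_n [<- <- <-]; exists p, q.
have hu := hash_range u.
split; first by split.
by split; split => //; [lia | apply: stop].
Qed.

Lemma same_shape (T T' : table K) :
  (forall r, occupied n T' r = occupied n T r /\ hash_at n h T' r = hash_at n h T r) ->
  [/\ wf n h T -> wf n h T',
      forall P, hash_count n h P T' = hash_count n h P T
    & forall i j, low_prefix n h T i j -> low_prefix n h T' i j].
Proof.
move=> shape; split.
- case=> hash_le sorted no_gap; split.
  + by move=> r; have [_ ->] := shape r.
  + by move=> r; have [-> ->] := shape r; have [-> ->] := shape r.+1; apply: sorted.
  + by move=> r s; have [-> ->] := shape r; have [-> _] := shape s; apply: no_gap.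
- by move=> P; apply: eq_big_nat => r _; have [-> ->] := shape r.
- by move=> i j low s s_in; have [-> ->] := shape s; apply: low.
Qed.

Lemma step_preserves (T T' : table K) o c d :
  step n h T o = Some (T', c, d) -> wf n h T ->
  [/\ wf n h T',
      forall P, hash_count n h P T' <=
                hash_count n h P T + count P [seq h u | u <- pmap (@ins_key K) [:: o]]
    & forall i j, low_prefix n h T i j -> low_prefix n h T' i j].
Proof.
case: o => u.
- move=> /insert_step [p [q [[-> _ _] [[p_pos hu_p p_q q_n] [before_p after_p shifted stop_q]]]]] wfT.
  split.
  + by apply: shift_insert_wf.
  + by move=> P; rewrite /= addn0; apply: shift_hash_count.
  + by move=> i j; apply: shift_low_prefix.
- rewrite /=; case: ifP => // found [<- _ _] wfT.
  set q := qpos n h T u in found *.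
  have shape r : occupied n (fun r => if r == q then Tomb K (h u) else T r) r = occupied n T r /\
                 hash_at n h (fun r => if r == q then Tomb K (h u) else T r) r = hash_at n h T r.
    rewrite /occupied /hash_at /get; case: eqP => [->|_] //.
    move: found; rewrite /get; case: ifP => //.
    by case: (T q) => //= x _ /eqP ->.
  have [wf' count' low'] := same_shape shape.
  by split => // [|P]; [apply: wf' | rewrite count' /= addn0].
- by case=> <- _ _ wfT; split => // P; rewrite /= addn0.
Qed.

Lemma exec_preserves (T T' : table K) ops l :
  exec n h T ops = Some (T', l) -> wf n h T ->
  [/\ wf n h T',
      forall P, hash_count n h P T' <=
                hash_count n h P T + count P [seq h u | u <- pmap (@ins_key K) ops]
    & forall i j, low_prefix n h T i j -> low_prefix n h T' i j].
Proof.
elim: ops T T' l => [|o ops IH] T T' l /=.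
  by case=> <- _ wfT; split => // P; rewrite addn0.
case E1: (step n h T o) => [[[T1 c] d]|] //.
case E2: (exec n h T1 ops) => [[Te l']|] // [<- _] wfT.
have [wf1 count1 low1] := step_preserves E1 wfT.
have [wf2 count2 low2] := IH _ _ _ E2 wf1.
split => // [P|i j /low1 /low2] //.
by have := count1 P; have := count2 P; case: (o) => u /=; lia.
Qed.

Lemma exec_split (T Tend : table K) pre o post res :
  exec n h T (pre ++ o :: post) = Some (Tend, res) ->
  exists T1 l1 T2 c d l2,
    [/\ exec n h T pre = Some (T1, l1), step n h T1 o = Some (T2, c, d),
        exec n h T2 post = Some (Tend, l2) & res = l1 ++ (c, d) :: l2].
Proof.
elim: pre T Tend res => [|o' pre IH] T Tend res /=.
  case E1: (step n h T o) => [[[T1 c] d]|] //.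
  case E2: (exec n h T1 post) => [[Te l']|] // [<- <-].
  by exists T, [::], T1, c, d, l'.
case E1: (step n h T o') => [[[T1 c] d]|] //.
case E2: (exec n h T1 (pre ++ o :: post)) => [[Te l']|] // [<- <-].
have [T2 [l1 [T3 [c' [d' [l2 [X1 X2 X3 ->]]]]]]] := IH _ _ _ E2.
by exists T2, ((c, d) :: l1), T3, c', d', l2; rewrite X1.
Qed.

Lemma exec_size (T T' : table K) ops l :
  exec n h T ops = Some (T', l) -> size l = size ops.
Proof.
elim: ops T T' l => [|o ops IH] T T' l /=; first by case=> _ <-.
case: (step n h T o) => [[[T1 c] d]|] //.
by case E: (exec n h T1 ops) => [[Te l']|] // [_ <-] /=; rewrite (IH _ _ _ E).
Qed.

Lemma rebuilt_wf (T0 : table K) : rebuilt n h T0 -> wf n h T0.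
Proof.
case=> no_tomb in_run sorted; split.
- move=> r; rewrite /hash_at /get; case: ifP => // r_in.
  have := no_tomb r r_in; case E: (T0 r) => [|x|a] //= _.
  by have [] := in_run r x r_in E.
- move=> r occ_r occ_r1.
  have r_in := occupied_range occ_r; have r1_in := occupied_range occ_r1.
  move: occ_r occ_r1; rewrite /occupied /hash_at !get_in // => occ_r occ_r1.
  by apply: sorted => //; lia.
- move=> r s occ_r s_in; have r_in := occupied_range occ_r.
  move: occ_r s_in; rewrite /occupied /hash_at get_in //.
  have := no_tomb r r_in; case E: (T0 r) => [|x|a] //= _ _ s_in.
  have [_ no_free] := in_run r x r_in E; have hx := hash_range x.
  by rewrite get_in; [apply: no_free | lia].
Qed.

Lemma rebuilt_hash_count (T0 : table K) P : rebuilt n h T0 ->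
  hash_count n h P T0 <= count P [seq h x | x <- pmap (fun q => key_of (T0 q)) (iota 1 n)].
Proof.
case=> no_tomb _ _.
have : all (fun r => 1 <= r <= n) (iota 1 n) by apply/allP => r; rewrite mem_iota; lia.
rewrite /hash_count /index_iota subn1 /=.
elim: (iota 1 n) => [|r s IH]; first by rewrite big_nil.
rewrite /= big_cons => /andP [r_in s_in].
have := IH s_in; rewrite /occupied /hash_at get_in //.
by have := no_tomb r r_in; case: (T0 r) => [|x|a] //= _ le; rewrite leq_add2l.
Qed.

End Operations.
Section Cost.
Variables (K : eqType) (n : nat) (h : K -> nat).

Definition hash_between (i B : nat) : pred nat := fun x => (i <= x) && (x <= B).

Lemma scan_split (T : table K) i e B : wf n h T -> 1 <= i <= e ->
  (forall s, i <= s < e -> occupied n T s /\ hash_at n h T s <= B) ->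
  exists j, [/\ i <= j <= e, low_prefix n h T i j &
                e - j <= hash_count n h (hash_between i B) T].
Proof.
move=> wfT /andP [i_pos i_e] scanned.
set j := first_at (fun s => i <= hash_at n h T s) i e.
have i_j : i <= j by apply: first_at_ge.
have j_e : j <= e by apply: first_at_le.
exists j; split; first by rewrite i_j j_e.
  move=> s /andP [i_s s_j]; have := first_at_before i_s s_j.
  by have [occ_s _] := scanned s ltac:(lia); rewrite -ltnNge.
case: (ltnP j e) => j_lt; last by have -> : e - j = 0 by lia.
have i_hj : i <= hash_at n h T j by apply: (first_at_hit j_lt).
have e_in : e.-1 <= n by have [occ _] := scanned e.-1 ltac:(lia); have := occupied_range occ; lia.
have tail : e - j <= \sum_(j <= r < e) (occupied n T r && hash_between i B (hash_at n h T r)).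
  rewrite -[e - j]muln1 -sum_nat_const_nat big_nat_cond [X in _ <= X]big_nat_cond.
  apply: leq_sum => r /andP [r_in _]; have [occ_r r_B] := scanned r ltac:(lia).
  have : hash_at n h T j <= hash_at n h T r.
    by apply: wf_hash_mono => //; try (move=> t t_in; have [] := scanned t); lia.
  by rewrite occ_r /hash_between; case: leqP; lia.
apply: leq_trans tail _.
rewrite /hash_count (big_cat_nat _ (n := j) (m := 1)) //=; try lia.
rewrite (big_cat_nat _ (n := e) (m := j) (p := n.+1)) //=; lia.
Qed.

Lemma spill_bound hs i D N :
  N <= count (hash_between i (i + D)) hs -> N <= 4 * spill hs i + 4 * D.+1.
Proof.
move=> N_le; case: (ltnP N (4 * D.+1)) => N_big; first lia.
set k := N %/ 4.
have D_k : D.+1 <= k by rewrite /k; lia.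
have dense : 4 * k <= count (fun a => i <= a < i + k) hs.
  apply: leq_trans _ (leq_trans N_le _); first by rewrite /k; lia.
  by apply: sub_count => x /andP [i_x x_D]; apply/andP; split => //; lia.
have k_lt : k < (size hs).+1 by have := count_size (fun a => i <= a < i + k) hs; lia.
have : k <= spill hs i.
  exact: (@leq_bigmax_cond _ (fun k : 'I_(size hs).+1 =>
           4 * k <= count (fun a => i <= a < i + k) hs) _ (Ordinal k_lt) dense).
rewrite /k; lia.
Qed.

Lemma offset_bound (T : table K) i j : low_prefix n h T i j -> i <= j ->
  j - i <= offset n h T i.
Proof.
move=> low i_j; case: (ltnP i j) => i_lt; last by have -> : j - i = 0 by lia.
have [occ _] := low j.-1 ltac:(lia); have := occupied_range occ => j_in.
have j_lt : j < n.+2 by lia.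
apply: (@leq_bigmax_cond _ (fun j : 'I_n.+2 => (i <= j) && all (fun q =>
          ~~ is_free (get n T q) && (slot_hash h (get n T q) < i)) (index_iota i j))
          (fun j => j - i) (Ordinal j_lt)).
rewrite /= i_j; apply/allP => s; rewrite mem_index_iota => s_in.
by have [occ_s low_s] := low s s_in; apply/andP.
Qed.

Definition op_key (o : op K) : K := match o with Ins u | Del u | Qry u => u end.

Hypothesis hash_range : forall x, 1 <= h x <= n.

Lemma query_cost (T : table K) u : wf n h T ->
  exists j, [/\ h u <= j, low_prefix n h T (h u) j &
    qpos n h T u - h u + 1 <= (j - h u) + hash_count n h (hash_between (h u) (h u + 0)) T + 1].
Proof.
move=> wfT; have hu := hash_range u; have [hu_q scanned] := qpos_spec n h T u.
have [j [/andP [hu_j _] low cost]] := @scan_split T (h u) (qpos n h T u) (h u + 0) wfT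
  ltac:(lia) ltac:(by rewrite addn0).
by exists j; split => //; lia.
Qed.

Lemma step_cost (T T' : table K) o c d : wf n h T ->
  step n h T o = Some (T', c, d) ->
  (match o with Ins _ => True | _ => d = 0 end) /\
  exists j, [/\ h (op_key o) <= j, low_prefix n h T (h (op_key o)) j &
    c <= (j - h (op_key o))
         + hash_count n h (hash_between (h (op_key o)) (h (op_key o) + d)) T + 1].
Proof.
move=> wfT; case: o => u; have hu := hash_range u.
- move=> /(insert_step hash_range).
  move=> [p [q [[_ -> ->] [[p_pos hu_p p_q q_n] [before_p after_p shifted stop_q]]]]].
  split => //; have below := @scan_below_peak _ _ _ _ _ p _ p_pos hu_p p_q q_n before_p after_p shifted stop_q wfT.
  have [j [/andP [hu_j _] low cost]] := @scan_split T (h u) q (h u + (peak_at n T q - h u))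
    wfT ltac:(lia) ltac:(by move=> s /below [occ le]; split => //; lia).
  by exists j; split => //=; lia.
- by rewrite /=; case: ifP => // _ [_ <- <-]; split => //; apply: query_cost.
- by case=> _ <- <-; split => //; apply: query_cost.
Qed.

Lemma window_count (T0 T1 : table K) pre o post l P :
  rebuilt n h T0 -> exec n h T0 pre = Some (T1, l) ->
  hash_count n h P T1 <= count P (window_hashes n h T0 (pre ++ o :: post)).
Proof.
move=> rb run; have [_ grow _] := exec_preserves hash_range run (rebuilt_wf hash_range rb).
apply: leq_trans (grow P) _.
rewrite /window_hashes pmap_cat map_cat !count_cat.
by have := rebuilt_hash_count P rb; lia.
Qed.

End Cost.

Theorem mainTheorem13 :
  exists C : nat,
  forall (K : eqType) (n : nat) (h : K -> nat) (T0 Tend : table K)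
         (ops : seq (op K)) (res : seq (nat * nat)),
  (forall x, 1 <= h x <= n) ->
  rebuilt n h T0 ->
  exec n h T0 ops = Some (Tend, res) ->
  forall (pre post : seq (op K)) (o : op K),
  ops = pre ++ o :: post ->
  let: (c, d) := nth (0, 0) res (size pre) in
  match o with
  | Ins u => c <= C * (offset n h Tend (h u)
                       + spill (window_hashes n h T0 ops) (h u) + d + 1)
  | Del u | Qry u => c <= C * (offset n h Tend (h u)
                       + spill (window_hashes n h T0 ops) (h u) + 1)
  end.
Proof.
exists 5 => K n h T0 Tend ops res hash_range rb run pre post o ops_eq.
rewrite ops_eq in run *.
have [T1 [l1 [T2 [c [d [l2 [run_pre run_o run_post ->]]]]]]] := exec_split run.
rewrite nth_cat (exec_size run_pre) ltnn subnn /=.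
(* the table before o is well formed; low prefixes then persist to the end *)
have [wf1 _ _] := exec_preserves hash_range run_pre (rebuilt_wf hash_range rb).
have [wf2 _ low2] := step_preserves hash_range run_o wf1.
have [_ _ low3] := exec_preserves hash_range run_post wf2.
have [d_eq [j [i_j low cost]]] := step_cost hash_range wf1 run_o.
have offset_j := offset_bound (low3 _ _ (low2 _ _ low)) i_j.
have spill_j := spill_bound (window_count hash_range o post
    (hash_between (h (op_key o)) (h (op_key o) + d)) rb run_pre).
by move: d_eq offset_j spill_j cost; case: (o) => u /=; try move=> ->; lia.
Qed.
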